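(* For every integer $d \ge 1$, every monoid in $\mathcal{C}_d$ is isomorphic to an additive submonoid of $\mathbb{N}^d$ of rank $d$.
   Context: All monoids are commutative, cancellative and reduced (the only invertible element is the identity). $\mathbb{N} = \{0,1,2,\dots\}$. For a monoid $H$, $\mathrm{gp}(H)$ denotes its Grothendieck (difference) group, and the rank of $H$ is the rank of the abelian group $\mathrm{gp}(H)$, i.e. $\dim_{\mathbb{Q}} \mathbb{Q}\otimes_{\mathbb{Z}} \mathrm{gp}(H)$. For $d \ge 1$, $\mathcal{C}_d$ denotes the collection of all rank-$d$ submonoids of free commutative monoids of finite rank. *)

From HB Require Import structures.
From mathcomp Require Import all_boot all_order all_algebra.
Set Implicit Arguments. Unset Strict Implicit. Unset Printing Implicit Defensive.
Import GRing.Theory.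
Local Open Scope ring_scope.

Definition natvec (n : nat) := {ffun 'I_n -> nat}.

Definition nv_zero (n : nat) : natvec n := [ffun => 0%N].
Definition nv_add (n : nat) (x y : natvec n) : natvec n := [ffun i => (x i + y i)%N].

Definition is_submonoid (n : nat) (H : natvec n -> Prop) : Prop :=
  H (nv_zero n) /\ (forall x y, H x -> H y -> H (nv_add x y)).

(* Embedding of N^n into Q^n. gp(H) is the subgroup of Z^n generated by H,
   so Q (x) gp(H) is the Q-span of H inside Q^n. *)
Definition nv_toQ (n : nat) (x : natvec n) : 'rV[rat]_n := \row_i ((x i)%:R).

Definition has_rank (n : nat) (H : natvec n -> Prop) (d : nat) : Prop :=
  (exists s : seq (natvec n),
      (forall x, x \in s -> H x) /\ \dim <<map (@nv_toQ n) s>>%VS = d) /\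
  (forall s : seq (natvec n),
      (forall x, x \in s -> H x) -> (\dim <<map (@nv_toQ n) s>>%VS <= d)%N).

Definition monoid_iso (n m : nat) (H : natvec n -> Prop) (K : natvec m -> Prop)
  : Prop :=
  exists f : natvec n -> natvec m,
    [/\ (forall x, H x -> K (f x)),
        f (nv_zero n) = nv_zero m,
        (forall x y, H x -> H y -> f (nv_add x y) = nv_add (f x) (f y)),
        (forall x y, H x -> H y -> f x = f y -> x = y)
      & (forall z, K z -> exists2 x, H x & f x = z)].

(* H spans a d-dimensional subspace V of Q^n. Some d coordinates of Q^n
   already separate the points of V (a row-free d x n matrix has an invertible
   d x d column submatrix), so the projection of N^n onto these coordinates is
   a monoid morphism that is injective on H. Its image K in N^d is isomorphic
   to H, and it still has rank d since the projection is injective on V. *)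
From mathcomp Require Import all_boot all_order all_algebra.
Set Implicit Arguments. Unset Strict Implicit. Unset Printing Implicit Defensive.
Import GRing.Theory.
Local Open Scope ring_scope.

Section ColumnSelection.

Variable F : fieldType.

Lemma row_free_colsub_unit d n (B : 'M[F]_(d, n)) :
  row_free B -> exists f : 'I_d -> 'I_n, colsub f B \in unitmx.
Proof.
move=> freeB; have fullBt : row_full B^T by rewrite /row_full mxrank_tr (eqP freeB).
exists (fullrankfun fullBt).
by rewrite -unitmx_tr trmx_mxsub; exact: fullrowsub_unit.
Qed.

Lemma vspace_colsub_inj n d (V : {vspace 'rV[F]_n}) :
  \dim V = d -> exists f : 'I_d -> 'I_n, {in V &, injective (colsub f)}.
Proof.
move=> <-; pose b := vbasis V; pose B : 'M[F]_(\dim V, n) := \matrix_i b`_i.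
have mulB c : c *m B = \sum_i c 0 i *: b`_i.
  by rewrite mulmx_sum_row; apply: eq_bigr => i _; rewrite rowK.
have freeB : row_free B.
  apply/inj_row_free => c; rewrite mulB => /freeP c0.
  by apply/rowP => i; rewrite mxE c0 // (basis_free (vbasisP V)).
have coordB v : v \in V -> v = (\row_i coord b i v) *m B.
  by move=> vV; rewrite mulB {1}(coord_vbasis vV); apply: eq_bigr => i _; rewrite mxE.
have [f unitBf] := row_free_colsub_unit freeB.
exists f => v w /coordB -> /coordB ->; rewrite -!mulmx_colsub.
by move/(can_inj (mulmxK unitBf)) ->.
Qed.

End ColumnSelection.

Lemma dim_limg_inj (F : fieldType) (aT rT : vectType F) (g : 'Hom(aT, rT))
    (U : {vspace aT}) :
  {in U &, injective g} -> \dim (g @: U) = \dim U.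
Proof.
move=> injg; apply: limg_dim_eq; apply/eqP; rewrite -subv0.
apply/subvP => v; rewrite memv_cap memv_ker memv0 => /andP[vU /eqP gv0].
by apply/eqP/injg; rewrite ?mem0v // gv0 linear0.
Qed.

Lemma nv_toQ_inj n : injective (@nv_toQ n).
Proof.
move=> x y /rowP exy; apply/ffunP => i.
by have /eqP := exy i; rewrite !mxE Num.Theory.eqr_nat => /eqP.
Qed.

Lemma has_rank_spanning_seq n (H : natvec n -> Prop) d : has_rank H d ->
  exists s : seq (natvec n),
    [/\ forall x, x \in s -> H x, \dim <<map (@nv_toQ n) s>> = d
      & forall x, H x -> nv_toQ x \in <<map (@nv_toQ n) s>>%VS].
Proof.
move=> [[s [sH dim_s]] rank_le]; exists s; split=> // x Hx.
have xsH y : y \in x :: s -> H y by rewrite inE => /orP[/eqP -> | /sH].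
have /eqP -> : <<map (@nv_toQ n) s>>%VS == <<map (@nv_toQ n) (x :: s)>>%VS.
  by rewrite eqEdim dim_s (rank_le _ xsH) andbT /= span_cons addvSr.
by rewrite memv_span //= mem_head.
Qed.

Lemma has_rank_full d (K : natvec d -> Prop) (s : seq (natvec d)) :
  (forall z, z \in s -> K z) -> \dim <<map (@nv_toQ d) s>> = d -> has_rank K d.
Proof.
move=> sK dim_s; split; first by exists s.
move=> t _; apply: leq_trans (dimvS (subvf _)) _.
by rewrite dimvf /dim /= mul1n.
Qed.

Definition nv_proj n m (f : 'I_m -> 'I_n) (x : natvec n) : natvec m :=
  [ffun j => x (f j)].

Lemma nv_proj0 n m (f : 'I_m -> 'I_n) : nv_proj f (nv_zero n) = nv_zero m.
Proof. by apply/ffunP => j; rewrite !ffunE. Qed.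

Lemma nv_projD n m (f : 'I_m -> 'I_n) :
  {morph nv_proj f : x y / nv_add x y}.
Proof. by move=> x y; apply/ffunP => j; rewrite !ffunE. Qed.

Lemma nv_toQ_proj n m (f : 'I_m -> 'I_n) x :
  nv_toQ (nv_proj f x) = colsub f (nv_toQ x).
Proof. by apply/rowP => j; rewrite !mxE ffunE. Qed.

Lemma dim_span_nv_proj n m (f : 'I_m -> 'I_n) (s : seq (natvec n)) :
  {in <<map (@nv_toQ n) s>>%VS &, injective (colsub f)} ->
  \dim <<map (@nv_toQ m) (map (nv_proj f) s)>> = \dim <<map (@nv_toQ n) s>>.
Proof.
pose p := linfun (colsub f : 'rV[rat]_n -> 'rV[rat]_m).
have pE v : p v = colsub f v by rewrite lfunE.
have -> : map (@nv_toQ m) (map (nv_proj f) s) = map p (map (@nv_toQ n) s).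
  by rewrite -!map_comp; apply: eq_map => x /=; rewrite pE nv_toQ_proj.
by move=> injf; rewrite -limg_span dim_limg_inj // => v w vV wV; rewrite !pE => /injf->.
Qed.

Definition nv_image n m (g : natvec n -> natvec m) (H : natvec n -> Prop) :
  natvec m -> Prop := fun z => exists2 x, H x & g x = z.

Section MonoidImage.

Variables (n m : nat) (g : natvec n -> natvec m) (H : natvec n -> Prop).
Hypotheses (g0 : g (nv_zero n) = nv_zero m) (gD : {morph g : x y / nv_add x y}).

Lemma is_submonoid_image : is_submonoid H -> is_submonoid (nv_image g H).
Proof.
move=> [H0 HD]; split; first by exists (nv_zero n).
by move=> _ _ [x Hx <-] [y Hy <-]; exists (nv_add x y); [exact: HD | exact: gD].
Qed.

Lemma monoid_iso_image :
  (forall x y, H x -> H y -> g x = g y -> x = y) -> monoid_iso H (nv_image g H).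
Proof. by move=> injg; exists g; split=> // x Hx; exists x. Qed.

End MonoidImage.

Theorem lemma4p1 :
  forall (d : nat), (1 <= d)%N ->
  forall (n : nat) (H : natvec n -> Prop),
    is_submonoid H -> has_rank H d ->
    exists K : natvec d -> Prop,
      [/\ is_submonoid K, has_rank K d & monoid_iso H K].
Proof.
move=> d _ n H monH /has_rank_spanning_seq[s [sH dim_s HV]].
have [f injf] := vspace_colsub_inj dim_s.
exists (nv_image (nv_proj f) H); split.
- exact: is_submonoid_image (nv_proj0 f) (nv_projD f) monH.
- apply: (@has_rank_full _ _ (map (nv_proj f) s)).
    by move=> _ /mapP[x xs ->]; exists x => //; exact: sH.
  by rewrite dim_span_nv_proj.
- apply: monoid_iso_image (nv_proj0 f) (nv_projD f) _ => x y Hx Hy.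
  move/(congr1 (@nv_toQ d)); rewrite !nv_toQ_proj => /injf.
  by move=> /(_ (HV x Hx) (HV y Hy)) /nv_toQ_inj.
Qed.
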